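(* There is no non-trivial quotient $Q$ of the identity functor on the category of groups such that $Q(G)$ is perfect for every group $G$; nor one such that $Q(G)$ is free for every group $G$; nor one such that $Q(G)$ is either trivial or non-abelian for every group $G$.
   Context: A quotient of the identity functor on the category of groups is a functor $Q$ together with a natural transformation $q:\mathrm{Id}\to Q$ such that each $q_G:G\to Q(G)$ is surjective. It is non-trivial if $Q(G)\neq 1$ for some group $G$. A group is perfect if it equals its commutator subgroup. *)

Set Implicit Arguments.

Record Group := MkGroup {
  carrier :> Type;
  gmul : carrier -> carrier -> carrier;
  gone : carrier;
  ginv : carrier -> carrier;
  gmul_assoc : forall x y z, gmul x (gmul y z) = gmul (gmul x y) z;
  gmul_1l : forall x, gmul gone x = x;
  gmul_1r : forall x, gmul x gone = x;
  gmul_Vl : forall x, gmul (ginv x) x = gone;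
  gmul_Vr : forall x, gmul x (ginv x) = gone
}.
Arguments gmul {g} _ _.
Arguments gone {g}.
Arguments ginv {g} _.

Record Hom (G H : Group) := MkHom {
  hom_fun :> G -> H;
  hom_mul : forall x y, hom_fun (gmul x y) = gmul (hom_fun x) (hom_fun y)
}.

Definition id_hom (G : Group) : Hom G G :=
  @MkHom G G (fun x => x) (fun x y => eq_refl).

Definition comp_hom (G H K : Group) (g : Hom H K) (f : Hom G H) : Hom G K.
Proof.
  refine (@MkHom G K (fun x => g (f x)) _).
  intros x y. rewrite (hom_mul f), (hom_mul g). reflexivity.
Defined.

(* A quotient of the identity functor on the category of groups:
   a functor Q : Grp -> Grp together with a natural transformation
   q : Id -> Q all of whose components are surjective. *)
Record QuotientOfId := MkQuot {
  Qobj : Group -> Group;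
  Qmap : forall G H : Group, Hom G H -> Hom (Qobj G) (Qobj H);
  Qmap_id : forall (G : Group) (x : Qobj G), Qmap (id_hom G) x = x;
  Qmap_comp : forall (G H K : Group) (f : Hom G H) (g : Hom H K) (x : Qobj G),
      Qmap (comp_hom g f) x = Qmap g (Qmap f x);
  qnat : forall G : Group, Hom G (Qobj G);
  qnat_natural : forall (G H : Group) (f : Hom G H) (x : G),
      qnat H (f x) = Qmap f (qnat G x);
  qnat_surj : forall (G : Group) (y : Qobj G), exists x : G, qnat G x = y
}.

Definition trivial_group (G : Group) : Prop := forall x : G, x = gone.

Definition nontrivial_quot (Q : QuotientOfId) : Prop :=
  exists G : Group, ~ trivial_group (Qobj Q G).

Definition commg {G : Group} (a b : G) : G :=
  gmul (gmul (gmul (ginv a) (ginv b)) a) b.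

(* The commutator subgroup: the subgroup generated by all commutators,
   i.e. the finite products of commutators (inverses of commutators are
   commutators). *)
Inductive in_commutator_subgroup (G : Group) : G -> Prop :=
| ics_one : in_commutator_subgroup G gone
| ics_mul : forall (a b x : G), in_commutator_subgroup G x ->
    in_commutator_subgroup G (gmul (commg a b) x).

Definition perfect (G : Group) : Prop :=
  forall x : G, in_commutator_subgroup G x.

Definition free_group (G : Group) : Prop :=
  exists (X : Type) (i : X -> G),
    forall (H : Group) (f : X -> H),
      (exists phi : Hom G H, forall x, phi (i x) = f x) /\
      (forall phi psi : Hom G H,
          (forall x, phi (i x) = psi (i x)) -> forall g, phi g = psi g).

Definition abelian (G : Group) : Prop := forall x y : G, gmul x y = gmul y x.

Definition trivial_or_nonabelian (G : Group) : Prop :=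
  trivial_group G \/ ~ abelian G.

(* Q(Z) and Q(Z x Z) are quotients of abelian groups, hence abelian.  Every
   element of every group is the image of 1 under a homomorphism from Z, so by
   naturality Q is trivial as soon as q_Z(1) = 1: thus Q(Z) is a non-trivial
   abelian group, which is neither perfect nor non-abelian.  If all values of Q
   were free, Q(Z) would be a non-trivial free group, mapping onto Z, while
   Q(Z x Z), being free and abelian, would be cyclic; but composing Q of the two
   projections with Q(Z) -> Z gives two linearly independent homomorphisms from
   Q(Z x Z) to Z, which a cyclic group does not have. *)

From Stdlib Require Import ZArith Lia Classical ClassicalEpsilon.
Set Implicit Arguments.
Open Scope Z_scope.

Lemma mulg_cancel_r (G : Group) (x y z : G) : gmul x z = gmul y z -> x = y.
Proof.
  intros E.
  rewrite <- (gmul_1r G x), <- (gmul_1r G y), <- (gmul_Vr G z), !gmul_assoc, E.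
  reflexivity.
Qed.

Arguments mulg_cancel_r {G x y} z.

Lemma hom_one (G H : Group) (f : Hom G H) : f gone = gone.
Proof.
  apply (mulg_cancel_r (f gone)).
  rewrite <- hom_mul, !gmul_1l. reflexivity.
Qed.

Definition triv_hom (G H : Group) : Hom G H :=
  @MkHom G H (fun _ => gone) (fun _ _ => eq_sym (gmul_1l H gone)).

Lemma abelian_surj_image (G H : Group) (f : Hom G H) :
  (forall y, exists x, f x = y) -> abelian G -> abelian H.
Proof.
  intros f_surj G_abelian y z.
  destruct (f_surj y) as [u <-], (f_surj z) as [v <-].
  rewrite <- !hom_mul, G_abelian. reflexivity.
Qed.

Lemma commutator_subgroup_abelian (G : Group) (x : G) :
  abelian G -> in_commutator_subgroup G x -> x = gone.
Proof.
  intros G_abelian Hx. induction Hx as [|a b x _ IH].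
  - reflexivity.
  - rewrite IH, gmul_1r. unfold commg.
    rewrite (G_abelian (ginv a) (ginv b)), <- (gmul_assoc _ (ginv b)), gmul_Vl,
      gmul_1r, gmul_Vl.
    reflexivity.
Qed.

Definition Zg : Group.
Proof. refine (@MkGroup Z Z.add 0 Z.opp _ _ _ _ _); intros; lia. Defined.

Lemma Zg_abelian : abelian Zg.
Proof. intros x y. simpl. lia. Qed.

Definition prod_group (G H : Group) : Group.
Proof.
  refine (@MkGroup (G * H) (fun u v => (gmul (fst u) (fst v), gmul (snd u) (snd v)))
            (gone, gone) (fun u => (ginv (fst u), ginv (snd u))) _ _ _ _ _);
    intros; simpl;
    rewrite ?gmul_assoc, ?gmul_1l, ?gmul_1r, ?gmul_Vl, ?gmul_Vr;
    try reflexivity; destruct x; reflexivity.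
Defined.

Definition fst_hom (G H : Group) : Hom (prod_group G H) G :=
  @MkHom (prod_group G H) G fst (fun _ _ => eq_refl).

Definition snd_hom (G H : Group) : Hom (prod_group G H) H :=
  @MkHom (prod_group G H) H snd (fun _ _ => eq_refl).

Lemma prod_group_abelian (G H : Group) :
  abelian G -> abelian H -> abelian (prod_group G H).
Proof.
  intros G_abelian H_abelian u v. simpl. rewrite G_abelian, H_abelian. reflexivity.
Qed.

(* The infinite dihedral group, pairs (s, n) standing for x |-> (-1)^s x + n. *)
Definition Dg : Group.
Proof.
  refine (@MkGroup (bool * Z)
            (fun u v => (xorb (fst u) (fst v), snd u + (if fst u then - snd v else snd v)))
            (false, 0)
            (fun u => (fst u, if fst u then snd u else - snd u)) _ _ _ _ _);
    intros; repeat match goal with p : (bool * Z)%type |- _ => destruct p as [[] ?] end;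
    simpl; f_equal; lia.
Defined.

Section Powers.
Variable G : Group.

Fixpoint npow (g : G) (n : nat) : G :=
  match n with O => gone | S k => gmul (npow g k) g end.

Definition zpow (g : G) (z : Z) : G :=
  if 0 <=? z then npow g (Z.to_nat z) else npow (ginv g) (Z.to_nat (- z)).

Lemma zpow_succ g z : zpow g (z + 1) = gmul (zpow g z) g.
Proof.
  unfold zpow. destruct (Z.leb_spec 0 z).
  - replace (0 <=? z + 1) with true by (symmetry; apply Z.leb_le; lia).
    replace (Z.to_nat (z + 1)) with (S (Z.to_nat z)) by lia. reflexivity.
  - destruct (Z.eqb_spec z (-1)) as [->|].
    + simpl. rewrite gmul_1l, gmul_Vl. reflexivity.
    + replace (0 <=? z + 1) with false by (symmetry; apply Z.leb_gt; lia).
      replace (Z.to_nat (- z)) with (S (Z.to_nat (- (z + 1)))) by lia.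
      simpl. rewrite <- gmul_assoc, gmul_Vl, gmul_1r. reflexivity.
Qed.

Lemma zpow_pred g z : zpow g (z - 1) = gmul (zpow g z) (ginv g).
Proof.
  replace z with ((z - 1) + 1) at 2 by lia.
  rewrite zpow_succ, <- gmul_assoc, gmul_Vr, gmul_1r. reflexivity.
Qed.

Lemma zpow_add g m n : zpow g (m + n) = gmul (zpow g m) (zpow g n).
Proof.
  induction n using Z.peano_ind.
  - rewrite Z.add_0_r. unfold zpow at 3. simpl. rewrite gmul_1r. reflexivity.
  - rewrite <- Z.add_1_r, Z.add_assoc, !zpow_succ, IHn, gmul_assoc. reflexivity.
  - rewrite <- Z.sub_1_r, Z.add_sub_assoc, !zpow_pred, IHn, gmul_assoc. reflexivity.
Qed.

Definition zpow_hom (g : G) : Hom Zg G := @MkHom Zg G (zpow g) (zpow_add g).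

Lemma zpow_hom_1 g : zpow_hom g 1 = g.
Proof. apply gmul_1l. Qed.
End Powers.

Arguments zpow_hom_1 {G} g.

(* [e] generates [G] in the sense that homomorphisms out of [G] are determined
   by their value at [e]; this replaces "<e> = G" and needs no subgroups. *)
Definition hom_generator (G : Group) (e : G) : Prop :=
  forall (H : Group) (f g : Hom G H), f e = g e -> forall y, f y = g y.

Lemma hom_generator_Z : hom_generator Zg 1.
Proof.
  intros H f g fg1 k. induction k using Z.peano_ind.
  - exact (eq_trans (hom_one f) (eq_sym (hom_one g))).
  - rewrite <- Z.add_1_r. change (k + 1) with (@gmul Zg k 1).
    rewrite !hom_mul, IHk, fg1. reflexivity.
  - apply (mulg_cancel_r (f 1)).
    rewrite fg1 at 2. rewrite <- !hom_mul.
    change (f (Z.pred k + 1) = g (Z.pred k + 1)).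
    rewrite Z.add_1_r, Z.succ_pred. exact IHk.
Qed.

Lemma hom_generator_surj (G K : Group) (p : Hom G K) (e : G) :
  (forall y, exists x, p x = y) -> hom_generator G e -> hom_generator K (p e).
Proof.
  intros p_surj e_gen H f g fg y. destruct (p_surj y) as [x <-].
  exact (e_gen H (comp_hom f p) (comp_hom g p) fg x).
Qed.

Lemma hom_generator_kernel {G H : Group} {e : G} {f : Hom G H} :
  hom_generator G e -> f e = gone -> forall y, f y = gone.
Proof. intros e_gen fe y. exact (e_gen H f (triv_hom G H) fe y). Qed.

Definition scale_hom (G : Group) (k : Z) (f : Hom G Zg) : Hom G Zg.
Proof.
  refine (@MkHom G Zg (fun y => k * f y) _).
  intros x y. rewrite hom_mul. simpl. ring.
Defined.

Lemma hom_generator_Z_proportional (G : Group) (e : G) (f g : Hom G Zg) (y : G) :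
  hom_generator G e -> g e * f y = f e * g y.
Proof.
  intros e_gen.
  apply (e_gen Zg (scale_hom (g e) f) (scale_hom (f e) g)). simpl. ring.
Qed.

Definition free_basis {G : Group} {X : Type} (i : X -> G) : Prop :=
  forall (H : Group) (f : X -> H),
    (exists phi : Hom G H, forall x, phi (i x) = f x) /\
    (forall phi psi : Hom G H,
        (forall x, phi (i x) = psi (i x)) -> forall g, phi g = psi g).

Lemma free_basis_abelian_subsingleton (G : Group) (X : Type) (i : X -> G) :
  free_basis i -> abelian G -> forall x z : X, x = z.
Proof.
  intros i_basis G_abelian x z. apply NNPP. intros xz.
  destruct (proj1 (i_basis Dg (fun w => if excluded_middle_informative (w = x)
                                          then ((true, 0) : Dg) else ((false, 1) : Dg))))
    as [phi phi_i].
  pose proof (f_equal phi (G_abelian (i x) (i z))) as C.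
  rewrite !hom_mul, !phi_i in C.
  destruct (excluded_middle_informative (x = x)); [|congruence].
  destruct (excluded_middle_informative (z = x)); [congruence|].
  discriminate C.
Qed.

Lemma free_abelian_hom_generator (G : Group) :
  free_group G -> abelian G -> exists e : G, hom_generator G e.
Proof.
  intros [X [i i_basis]] G_abelian.
  destruct (classic (inhabited X)) as [[x0]|X_empty].
  - exists (i x0). intros H f g fg.
    apply (proj2 (i_basis H (fun _ => f (i x0)))). intros x.
    rewrite (free_basis_abelian_subsingleton i_basis G_abelian x x0). exact fg.
  - exists gone. intros H f g _.
    apply (proj2 (i_basis H (fun _ => gone))). intros x. destruct (X_empty (inhabits x)).
Qed.

Lemma free_nontrivial_hom_Z (G : Group) :
  free_group G -> ~ trivial_group G -> exists (r : Hom G Zg) (y : G), r y <> 0.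
Proof.
  intros [X [i i_basis]] G_nontriv.
  destruct (classic (inhabited X)) as [[x]|X_empty].
  - destruct (proj1 (i_basis Zg (fun _ => 1))) as [r r_i].
    exists r, (i x). rewrite r_i. discriminate.
  - exfalso. apply G_nontriv. intros g.
    apply (proj2 (i_basis G i) (id_hom G) (triv_hom G G)).
    intros x. destruct (X_empty (inhabits x)).
Qed.

Section Quotient.
Variable Q : QuotientOfId.

Lemma Q_abelian (G : Group) : abelian G -> abelian (Qobj Q G).
Proof. apply abelian_surj_image with (f := qnat Q G), qnat_surj. Qed.

Lemma Q_hom_generator_Z : hom_generator (Qobj Q Zg) (qnat Q Zg 1).
Proof. apply hom_generator_surj; [apply qnat_surj | exact hom_generator_Z]. Qed.

Lemma Q_Z_nontrivial : nontrivial_quot Q -> ~ trivial_group (Qobj Q Zg).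
Proof.
  intros [G QG_nontriv] QZ_triv. apply QG_nontriv. intros y.
  destruct (qnat_surj Q G y) as [g <-].
  rewrite <- (zpow_hom_1 g), qnat_natural, (QZ_triv (qnat Q Zg 1)).
  apply hom_one.
Qed.

Lemma Q_not_free_valued :
  nontrivial_quot Q -> ~ (forall G, free_group (Qobj Q G)).
Proof.
  intros Q_nontriv Q_free.
  set (c := qnat Q Zg 1).
  destruct (free_nontrivial_hom_Z (Q_free Zg) (Q_Z_nontrivial Q_nontriv)) as [r [y ry]].
  assert (rc : r c <> 0).
  { intros rc0. exact (ry (hom_generator_kernel Q_hom_generator_Z rc0 y)). }
  set (ZZ := prod_group Zg Zg).
  destruct (free_abelian_hom_generator (Q_free ZZ)
              (Q_abelian (prod_group_abelian Zg_abelian Zg_abelian))) as [e e_gen].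
  set (p1 := comp_hom r (Qmap Q (fst_hom Zg Zg))).
  set (p2 := comp_hom r (Qmap Q (snd_hom Zg Zg))).
  assert (p1a : p1 (qnat Q ZZ (1, 0)) = r c).
  { unfold p1. simpl. rewrite <- qnat_natural. reflexivity. }
  assert (p1b : p1 (qnat Q ZZ (0, 1)) = 0).
  { unfold p1. simpl. rewrite <- qnat_natural.
    exact (eq_trans (f_equal r (hom_one _)) (hom_one r)). }
  assert (p2b : p2 (qnat Q ZZ (0, 1)) = r c).
  { unfold p2. simpl. rewrite <- qnat_natural. reflexivity. }
  assert (p1e : p1 e <> 0).
  { intros p1e0. apply rc. rewrite <- p1a. exact (hom_generator_kernel e_gen p1e0 _). }
  pose proof (hom_generator_Z_proportional p1 p2 (qnat Q ZZ (0, 1)) e_gen) as prop.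
  rewrite p1b, p2b, Z.mul_0_r in prop.
  symmetry in prop. apply Z.mul_eq_0 in prop. tauto.
Qed.
End Quotient.

Theorem corollary3p14 :
  (~ exists Q : QuotientOfId,
       nontrivial_quot Q /\ forall G : Group, perfect (Qobj Q G)) /\
  (~ exists Q : QuotientOfId,
       nontrivial_quot Q /\ forall G : Group, free_group (Qobj Q G)) /\
  (~ exists Q : QuotientOfId,
       nontrivial_quot Q /\ forall G : Group, trivial_or_nonabelian (Qobj Q G)).
Proof.
  split; [|split].
  - intros [Q [Q_nontriv Q_perfect]]. apply (Q_Z_nontrivial Q_nontriv). intros x.
    apply commutator_subgroup_abelian; [apply Q_abelian, Zg_abelian | apply Q_perfect].
  - intros [Q [Q_nontriv Q_free]]. exact (Q_not_free_valued Q_nontriv Q_free).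
  - intros [Q [Q_nontriv Q_triv_or_nonab]].
    destruct (Q_triv_or_nonab Zg) as [QZ_triv|QZ_nonab].
    + exact (Q_Z_nontrivial Q_nontriv QZ_triv).
    + exact (QZ_nonab (Q_abelian Q Zg_abelian)).
Qed.
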